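(* Let $R$ be a ring. The following are equivalent: (i) $R$ is strongly nil-clean; (ii) ${\rm T}_n(R)$ is strongly weakly nil-clean for all $n \in \mathbb{N}$; (iii) ${\rm T}_n(R)$ is strongly weakly nil-clean for some $n \geq 3$; (iv) ${\rm T}_n(R)$ is GSWNC for some $n \geq 3$.
   Context: All rings are associative with identity. ${\rm T}_n(R)$ denotes the ring of $n\times n$ upper triangular matrices over $R$. An element $a$ of a ring is strongly nil-clean if $a = e + q$ with $e$ idempotent, $q$ nilpotent and $eq = qe$; it is strongly weakly nil-clean if there exist an idempotent $e$ and a nilpotent $q$ with $eq = qe$ such that $a = q + e$ or $a = q - e$. A ring is strongly nil-clean (resp. strongly weakly nil-clean) if all its elements are. A ring is GSWNC if every non-invertible element is strongly weakly nil-clean. *)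

From mathcomp Require Import all_boot all_order all_algebra.
Set Implicit Arguments. Unset Strict Implicit. Unset Printing Implicit Defensive.
Import GRing.Theory.
Local Open Scope ring_scope.

Definition is_idempotent (R : pzRingType) (e : R) : Prop := e * e = e.
Definition is_nilpotent (R : pzRingType) (q : R) : Prop := exists k : nat, q ^+ k = 0.

Definition sn_clean_elt (R : pzRingType) (a : R) : Prop :=
  exists e q : R, is_idempotent e /\ is_nilpotent q /\ e * q = q * e /\ a = e + q.

Definition strongly_nil_clean (R : pzRingType) : Prop :=
  forall a : R, sn_clean_elt a.

(* T_n(R): upper triangular n x n matrices, viewed as a subring of M_n(R). *)
Definition upper_trig (R : pzRingType) (n : nat) (A : 'M[R]_n) : Prop :=
  forall i j : 'I_n, (j < i)%N -> A i j = 0.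

Definition mx_pow (R : pzRingType) (n : nat) (A : 'M[R]_n) (k : nat) : 'M[R]_n :=
  iter k (mulmx A) 1%:M.

Definition Tn_swnc_elt (R : pzRingType) (n : nat) (A : 'M[R]_n) : Prop :=
  exists E Q : 'M[R]_n,
    [/\ upper_trig E, upper_trig Q, E *m E = E,
        (exists k : nat, mx_pow Q k = 0) & E *m Q = Q *m E]
    /\ (A = Q + E \/ A = Q - E).

Definition Tn_unit (R : pzRingType) (n : nat) (A : 'M[R]_n) : Prop :=
  exists B : 'M[R]_n, upper_trig B /\ A *m B = 1%:M /\ B *m A = 1%:M.

Definition Tn_strongly_weakly_nil_clean (R : pzRingType) (n : nat) : Prop :=
  forall A : 'M[R]_n, upper_trig A -> Tn_swnc_elt A.

Definition Tn_GSWNC (R : pzRingType) (n : nat) : Prop :=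
  forall A : 'M[R]_n, upper_trig A -> ~ Tn_unit A -> Tn_swnc_elt A.

(* If R is strongly nil-clean, then a - a^2 is nilpotent for every a in R.  For
   an upper triangular A, the matrix A - A^2 is then upper triangular with
   nilpotent diagonal, hence nilpotent.  Iterating p |-> 3p^2 - 2p^3 from X
   produces integer polynomials p with p - p^2 divisible by an arbitrarily high
   power of X - X^2 and X - p divisible by X - X^2, so E := p(A) is an upper
   triangular idempotent commuting with A, and A - E is nilpotent.

   Conversely, taking the diagonal of an upper triangular matrix is a ring
   morphism.  Apply the hypothesis to the non-unit diag(a, 1, 0, ..., 0), so
   that A = Q + E or A = Q - E.  With the plus sign, a = e + q directly.  With
   the minus sign, the entry 1 = q' - e' forces e' = 1 and q' = 2, so 2 is
   nilpotent and a = q - e = e + (q - 2e) is strongly nil-clean. *)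

From HB Require Import structures.
From mathcomp Require Import all_boot all_order all_algebra.
From mathcomp Require Import zify ring.
Set Implicit Arguments. Unset Strict Implicit. Unset Printing Implicit Defensive.
Import GRing.Theory.
Local Open Scope ring_scope.

Lemma oner0_all_eq0 (S : pzRingType) : (1 : S) = 0 -> forall x : S, x = 0.
Proof. by move=> S10 x; rewrite -[x]mulr1 S10 mulr0. Qed.

Section Nilpotent.
Variable S : pzRingType.
Implicit Types x y e q : S.

Lemma expr_eq0_le x k m : x ^+ k = 0 -> (k <= m)%N -> x ^+ m = 0.
Proof. by move=> xk0 /subnKC <-; rewrite exprD xk0 mul0r. Qed.

Lemma nilpotentN x : is_nilpotent x -> is_nilpotent (- x).
Proof. by move=> [k xk0]; exists k; rewrite exprNn xk0 mulr0. Qed.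

Lemma nilpotentM_comm x y : GRing.comm x y -> is_nilpotent x -> is_nilpotent (x * y).
Proof. by move=> cxy [k xk0]; exists k; rewrite exprMn_comm // xk0 mul0r. Qed.

Lemma nilpotentD_comm x y :
  GRing.comm x y -> is_nilpotent x -> is_nilpotent y -> is_nilpotent (x + y).
Proof.
move=> cxy [k xk0] [l yl0]; exists (k + l)%N.
rewrite exprDn_comm // big1 // => i _.
have [li | il] := leqP l i; first by rewrite (expr_eq0_le yl0 li) mulr0 mul0rn.
by rewrite (@expr_eq0_le x k) ?mul0r ?mul0rn //; have := ltn_ord i; lia.
Qed.

Lemma nilpotent_common_exp (I : finType) (F : I -> S) :
  (forall i, is_nilpotent (F i)) -> exists k, forall i, F i ^+ k = 0.
Proof.
move=> Fnil; suff [k Fk0] : exists k, forall i, i \in enum I -> F i ^+ k = 0.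
  by exists k => i; apply: Fk0; rewrite mem_enum.
elim: (enum I) => [|i s [k Fk0]]; first by exists 0%N.
have [l Fil0] := Fnil i; exists (k + l)%N => j; rewrite inE => /predU1P[->|js].
  by rewrite exprD Fil0 mulr0.
by rewrite exprD Fk0 ?mul0r.
Qed.

Lemma sn_clean_nilpotent_sub_sqr x : sn_clean_elt x -> is_nilpotent (x - x ^+ 2).
Proof.
move=> [e [q [ee [qnil [eq ->]]]]].
have -> : e + q - (e + q) ^+ 2 = q * (1 - e *+ 2 - q).
  rewrite expr2 mulrDl !mulrDr ee eq !mulrN mulr1 mulr2n mulrDr.
  rewrite -[e + q * e + _]addrA [q * e + (q * e + _)]addrA [in LHS]opprD.
  by rewrite addrACA subrr add0r opprD addrA.
apply: nilpotentM_comm qnil; apply: commrB; last exact: commr_refl.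
by apply: commrB; [exact: commr1 | apply: commrMn; rewrite /GRing.comm eq].
Qed.

Lemma nilpotent2_of_sub_idempotent_eq1 e q :
  is_idempotent e -> is_nilpotent q -> q - e = 1 -> is_nilpotent (2%:R : S).
Proof.
move=> ee [k qk0] /eqP; rewrite subr_eq => /eqP qE.
have qe1 : q * (e - 1) = e - 1 by rewrite qE mulrDl mul1r mulrBr ee mulr1 subrr addr0.
have qXe1 j : q ^+ j * (e - 1) = e - 1.
  by elim: j => [|j IHj]; rewrite ?mul1r // exprSr -mulrA qe1.
have e1 : e = 1 by apply/eqP; rewrite -subr_eq0 -(qXe1 k) qk0 mul0r.
by exists k; rewrite mulr2n -{2}e1 -qE.
Qed.

Lemma sn_clean_sub_of_nilpotent2 e q :
  is_nilpotent (2%:R : S) -> is_idempotent e -> is_nilpotent q -> e * q = q * e ->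
  sn_clean_elt (q - e).
Proof.
move=> twonil ee qnil eq; exists e, (q - e *+ 2); do 2!split=> //.
  apply: nilpotentD_comm qnil _; first by apply/commrN/commrMn.
  apply/nilpotentN; rewrite -mulr_natl.
  by apply: nilpotentM_comm twonil; exact/commr_sym/commr_nat.
split; first by rewrite mulrBr mulrBl eq mulrnAl mulrnAr.
by rewrite addrCA mulr2n opprD addNKr.
Qed.

End Nilpotent.

Lemma exists_poly_int_eval (S : pzRingType) (x : S) :
  exists phi : {rmorphism {poly int} -> S}, phi 'X = x.
Proof.
have [S10 | S1n0] := eqVneq (1 : S) 0.
  exists ((intr : int -> S) \o horner_eval 0).
  by rewrite (oner0_all_eq0 S10 x); exact: oner0_all_eq0.
(* horner_morph needs a nontrivial codomain *)
pose S' : nzRingType := HB.pack S (GRing.PzSemiRing_isNonZero.Build S S1n0).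
have cfx : commr_rmorph (intr : int -> S') x by move=> c; exact: commr_int.
by exists (horner_morph cfx : {rmorphism {poly int} -> S'}); rewrite /= horner_morphX.
Qed.

Lemma idempotent_lift_poly (m : nat) : exists p : {poly int},
  (exists r, p - p ^+ 2 = ('X - 'X ^+ 2) ^+ m.+1 * r) /\
  (exists w, 'X - p = ('X - 'X ^+ 2) * w).
Proof.
set t : {poly int} := 'X - 'X ^+ 2.
elim: m => [|m [p [[r pr] [w pw]]]].
  by exists 'X; split; [exists 1; rewrite expr1 mulr1 | exists 0; rewrite subrr mulr0].
exists (3%:R * p ^+ 2 - 2%:R * p ^+ 3); split.
  exists (t ^+ m * r ^+ 2 * (3%:R + 4%:R * (p - p ^+ 2))).
  have -> : 3%:R * p ^+ 2 - 2%:R * p ^+ 3 - (3%:R * p ^+ 2 - 2%:R * p ^+ 3) ^+ 2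
          = (p - p ^+ 2) ^+ 2 * (3%:R + 4%:R * (p - p ^+ 2)) by ring.
  by rewrite pr !exprS; ring.
exists (w + t ^+ m * r * (1 - 2%:R * p)).
have -> : 'X - (3%:R * p ^+ 2 - 2%:R * p ^+ 3)
        = ('X - p) + (p - p ^+ 2) * (1 - 2%:R * p) by ring.
by rewrite pw pr exprS; ring.
Qed.

Lemma idempotent_lift (S : pzRingType) (phi : {rmorphism {poly int} -> S}) :
  is_nilpotent (phi 'X - phi 'X ^+ 2) ->
  exists p, is_idempotent (phi p) /\ is_nilpotent (phi 'X - phi p).
Proof.
move=> [m tm0]; have [p [[r pr] [w pw]]] := idempotent_lift_poly m.
have phit : phi ('X - 'X ^+ 2) = phi 'X - phi 'X ^+ 2 by rewrite rmorphB rmorphXn.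
exists p; split.
  have : phi (p - p ^+ 2) = 0 by rewrite pr rmorphM rmorphXn phit exprS tm0 mulr0 mul0r.
  by rewrite rmorphB rmorphXn expr2 => /eqP; rewrite subr_eq0 => /eqP.
by exists m; rewrite -rmorphB pw -rmorphXn exprMn rmorphM rmorphXn phit tm0 mul0r.
Qed.

Section UpperTriangular.
Variables (R : pzRingType) (n : nat).
Implicit Types A B : 'M[R]_n.

Lemma upper_trig0 : upper_trig (0 : 'M[R]_n).
Proof. by move=> i j _; rewrite mxE. Qed.

Lemma upper_trig1 : upper_trig (1 : 'M[R]_n).
Proof. by move=> i j ji; rewrite -idmxE mxE -val_eqE /= gtn_eqF. Qed.

Lemma upper_trig_diag_mx (d : 'rV[R]_n) : upper_trig (diag_mx d).
Proof. by move=> i j ji; rewrite mxE -val_eqE /= gtn_eqF. Qed.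

Lemma upper_trigD A B : upper_trig A -> upper_trig B -> upper_trig (A + B).
Proof. by move=> uA uB i j ji; rewrite mxE uA ?uB ?addr0. Qed.

Lemma upper_trigN A : upper_trig A -> upper_trig (- A).
Proof. by move=> uA i j ji; rewrite mxE uA ?oppr0. Qed.

Lemma upper_trigM A B : upper_trig A -> upper_trig B -> upper_trig (A * B).
Proof.
move=> uA uB i j ji; rewrite -mulmxE mxE big1 // => l _.
have [li | il] := ltnP l i; first by rewrite uA ?mul0r.
by rewrite uB ?mulr0 // (leq_trans ji il).
Qed.

Lemma upper_trigX A k : upper_trig A -> upper_trig (A ^+ k).
Proof.
by move=> uA; elim: k => [|k IHk]; [exact: upper_trig1 | rewrite exprS; exact: upper_trigM].
Qed.

Lemma upper_trig_int (c : int) : upper_trig (c%:~R : 'M[R]_n).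
Proof.
have upper_trig_nat k : upper_trig (k%:R : 'M[R]_n).
  elim: k => [|k IHk]; first exact: upper_trig0.
  by rewrite mulrS; exact: upper_trigD (upper_trig1) IHk.
case: c => k; first exact: upper_trig_nat.
by rewrite NegzE mulrNz; exact/upper_trigN/upper_trig_nat.
Qed.

Lemma upper_trig_poly_int (phi : {rmorphism {poly int} -> 'M[R]_n}) p :
  upper_trig (phi 'X) -> upper_trig (phi p).
Proof.
move=> uX; elim/poly_ind: p => [|p c IHp]; first by rewrite rmorph0; exact: upper_trig0.
rewrite rmorphD rmorphM -[c]intz !rmorph_int.
by apply: upper_trigD; [exact: upper_trigM | exact: upper_trig_int].
Qed.

Lemma upper_trigM_diag A B i :
  upper_trig A -> upper_trig B -> (A * B) i i = A i i * B i i.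
Proof.
move=> uA uB; rewrite -mulmxE mxE (bigD1 i) //= big1 ?addr0 // => l li.
have [il | lI | /val_inj eli] := ltngtP l i; first by rewrite uA ?mul0r.
  by rewrite uB ?mulr0.
by rewrite eli eqxx in li.
Qed.

Lemma upper_trigX_diag A k i : upper_trig A -> (A ^+ k) i i = A i i ^+ k.
Proof.
move=> uA; elim: k => [|k IHk]; first by rewrite !expr0 -idmxE mxE eqxx.
by rewrite !exprS upper_trigM_diag ?IHk //; exact: upper_trigX.
Qed.

Lemma mx_powE A k : mx_pow A k = A ^+ k.
Proof. by elim: k => [|k IHk] //; rewrite exprS -IHk. Qed.

Lemma strictly_upper_exprn A :
  (forall i j : 'I_n, (j <= i)%N -> A i j = 0) ->
  forall k (i j : 'I_n), (j < i + k)%N -> (A ^+ k) i j = 0.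
Proof.
move=> sA; elim=> [|k IHk] i j.
  by rewrite addn0 expr0 -idmxE mxE -val_eqE /= => /gtn_eqF ->.
move=> jik; rewrite exprS -mulmxE mxE big1 // => l _.
have [li | il] := leqP l i; first by rewrite sA ?mul0r.
by rewrite IHk ?mulr0 // (leq_trans jik) // addnS -addSn leq_add2r.
Qed.

Lemma upper_trig_nilpotent A :
  upper_trig A -> (forall i, is_nilpotent (A i i)) -> is_nilpotent A.
Proof.
move=> uA /nilpotent_common_exp[k Ak0]; exists (k * n)%N.
rewrite exprM; apply/matrixP => i j; rewrite [RHS]mxE.
apply: strictly_upper_exprn; last by rewrite (leq_trans (ltn_ord j)) ?leq_addl.
move=> i' j'; rewrite leq_eqVlt => /orP[/eqP/val_inj -> | j'i'].
  by rewrite upper_trigX_diag.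
exact: upper_trigX.
Qed.

Lemma Tn_nil_clean_pair_diag (E Q : 'M[R]_n) i :
  upper_trig E -> upper_trig Q -> E *m E = E -> (exists k, mx_pow Q k = 0) ->
  E *m Q = Q *m E ->
  [/\ is_idempotent (E i i), is_nilpotent (Q i i) & E i i * Q i i = Q i i * E i i].
Proof.
move=> uE uQ + [k]; rewrite mx_powE !mulmxE => EE Qk0 EQ; split.
- by rewrite /is_idempotent -upper_trigM_diag // EE.
- by exists k; rewrite -upper_trigX_diag // Qk0 mxE.
- by rewrite -!upper_trigM_diag // EQ.
Qed.

Lemma Tn_unit_diag_neq0 A i :
  (1 : R) != 0 -> upper_trig A -> Tn_unit A -> A i i != 0.
Proof.
move=> R1n0 uA [B [uB [AB _]]]; apply: contra_neq R1n0 => Aii0.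
have := congr1 (fun M : 'M[R]_n => M i i) AB.
by rewrite /= mulmxE upper_trigM_diag // Aii0 mul0r mxE eqxx => Rzero; exact: esym Rzero.
Qed.

End UpperTriangular.

Lemma Tn_swnc_of_sn_clean (R : pzRingType) n :
  strongly_nil_clean R -> Tn_strongly_weakly_nil_clean R n.
Proof.
move=> snR A uA; have [phi phiA] := exists_poly_int_eval A.
have [p [Eidem [k AEk0]]] : exists p, is_idempotent (phi p) /\ is_nilpotent (phi 'X - phi p).
  apply: idempotent_lift; rewrite phiA.
  apply: upper_trig_nilpotent => [|i]; first exact/upper_trigD/upper_trigN/upper_trigX.
  by rewrite mxE [X in _ + X]mxE upper_trigX_diag //; apply: sn_clean_nilpotent_sub_sqr.
have uE : upper_trig (phi p) by apply: upper_trig_poly_int; rewrite phiA.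
have EA : phi p * A = A * phi p by rewrite -phiA -!rmorphM mulrC.
exists (phi p), (A - phi p); split; last by left; rewrite subrK.
split=> //; first exact/upper_trigD/upper_trigN.
  by exists k; rewrite mx_powE -phiA.
by rewrite !mulmxE mulrBr mulrBl Eidem EA.
Qed.

Lemma sn_clean_of_Tn_GSWNC (R : pzRingType) n :
  Tn_GSWNC R n.+3 -> strongly_nil_clean R.
Proof.
move=> gswnc a; have [R10 | R1n0] := eqVneq (1 : R) 0.
  exists 0, 0; rewrite /is_idempotent mul0r addr0 (oner0_all_eq0 R10 a).
  by do 2!split=> //; exists 1%N; rewrite expr1.
pose A : 'M[R]_n.+3 := diag_mx (\row_j nth 0 [:: a; 1] j).
have AE i : A i i = nth 0 [:: a; 1] i by rewrite !mxE eqxx mulr1n.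
have Anot_unit : ~ Tn_unit A.
  move=> /(Tn_unit_diag_neq0 ord_max R1n0 (upper_trig_diag_mx _)).
  by rewrite AE /= nth_nil eqxx.
have [E [Q [[uE uQ EE Qnil EQ] AQE]]] := gswnc A (upper_trig_diag_mx _) Anot_unit.
have [e0idem q0nil e0q0] := Tn_nil_clean_pair_diag ord0 uE uQ EE Qnil EQ.
case: AQE => AQE.
  by exists (E ord0 ord0), (Q ord0 ord0); rewrite -[a](AE ord0) AQE mxE addrC.
have AE_diag i : A i i = Q i i - E i i by rewrite AQE !mxE.
pose i1 : 'I_n.+3 := Ordinal (isT : 1 < n.+3)%N.
have [e1idem q1nil _] := Tn_nil_clean_pair_diag i1 uE uQ EE Qnil EQ.
have twonil : is_nilpotent (2%:R : R).
  by apply: nilpotent2_of_sub_idempotent_eq1 e1idem q1nil _; rewrite -AE_diag AE.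
by rewrite -[a](AE ord0) AE_diag; apply: sn_clean_sub_of_nilpotent2.
Qed.

Theorem proposition2p9 (R : pzRingType) :
  (strongly_nil_clean R <-> forall n : nat, Tn_strongly_weakly_nil_clean R n) /\
  (strongly_nil_clean R <-> exists n : nat, (3 <= n)%N /\ Tn_strongly_weakly_nil_clean R n) /\
  (strongly_nil_clean R <-> exists n : nat, (3 <= n)%N /\ Tn_GSWNC R n).
Proof.
have swnc_GSWNC n : Tn_strongly_weakly_nil_clean R n -> Tn_GSWNC R n.
  by move=> swnc A uA _; exact: swnc.
have sn_of_GSWNC n : (3 <= n)%N -> Tn_GSWNC R n -> strongly_nil_clean R.
  by case: n => [|[|[|n]]] // _; exact: sn_clean_of_Tn_GSWNC.
split; [|split]; split.
- by move=> snR n; exact: Tn_swnc_of_sn_clean.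
- by move=> swnc; apply: (sn_of_GSWNC 3%N) => //; exact: swnc_GSWNC.
- by move=> snR; exists 3%N; split=> //; exact: Tn_swnc_of_sn_clean.
- by case=> n [n3 swnc]; apply: (sn_of_GSWNC n n3); exact: swnc_GSWNC.
- by move=> snR; exists 3%N; split=> //; apply/swnc_GSWNC/Tn_swnc_of_sn_clean.
- by case=> n [n3 gswnc]; exact: sn_of_GSWNC gswnc.
Qed.
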